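(* Let $c>0$, $T>0$ and $\Delta_1,\dots,\Delta_K>0$. Let $\Phi_c=\sup\{x\in\mathbb{R}:\sum_{i=1}^K\max\{\frac{x-\ln\Delta_i^{-1}}{c\Delta_i^2/2},0\}\le T\}$. Then the vector $(x_1,\dots,x_K)$ with \[ x_i=\max\Big\{\frac{\Phi_c-\ln\Delta_i^{-1}}{c\Delta_i^2/2},\,0\Big\} \] is an optimal solution of the program $\mathscr{P}_c(\{\Delta_i\}_{i=1}^K,T)$.
   Context: For $c>0$, $T\ge0$ and positive reals $\Delta_1,\dots,\Delta_K$, the program $\mathscr{P}_c(\{\Delta_i\}_{i=1}^K,T)$ is: minimize $\sum_{i=1}^K\exp(-c x_i\Delta_i^2)$ subject to $x_1+\dots+x_K=T$, $x_i\ge0$; its optimal value is also denoted $\mathscr{P}_c(\{\Delta_i\}_{i=1}^K,T)$. *)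

From HB Require Import structures.
From mathcomp Require Import all_boot all_order all_algebra.
From mathcomp Require Import all_classical all_reals all_analysis.
Set Implicit Arguments. Unset Strict Implicit. Unset Printing Implicit Defensive.
Import Order.TTheory GRing.Theory Num.Theory.
Local Open Scope ring_scope.
Local Open Scope classical_set_scope.

Definition Pobj {R : realType} {K : nat} (c : R) (D : 'I_K -> R) (x : 'I_K -> R) : R :=
  \sum_(i < K) expR (- (c * x i * D i ^+ 2)).

Definition Pfeasible {R : realType} {K : nat} (T : R) (x : 'I_K -> R) : Prop :=
  (\sum_(i < K) x i = T) /\ (forall i, 0 <= x i).

Definition Poptimal {R : realType} {K : nat} (c : R) (D : 'I_K -> R) (T : R)
  (x : 'I_K -> R) : Prop :=
  Pfeasible T x /\ (forall y, Pfeasible T y -> Pobj c D x <= Pobj c D y).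

Definition Phi {R : realType} {K : nat} (c : R) (D : 'I_K -> R) (T : R) : R :=
  sup [set z : R | \sum_(i < K) Num.max ((z - ln (D i)^-1) / (c * D i ^+ 2 / 2)) 0 <= T].

From HB Require Import structures.
From mathcomp Require Import all_boot all_order all_algebra.
From mathcomp Require Import all_classical all_reals all_analysis.
From mathcomp Require Import lra ring.

Set Implicit Arguments.
Unset Strict Implicit.
Unset Printing Implicit Defensive.
Import Order.TTheory GRing.Theory Num.Theory numFieldNormedType.Exports.
Local Open Scope ring_scope.
Local Open Scope classical_set_scope.

(* The level function g z := sum_i max((z - ln D_i^-1) / (c D_i^2 / 2), 0) is
   continuous, so its sup-level Phi_c
   satisfies g Phi_c = T: the proposed point is feasible.  Optimality is the KKT
   argument for the convex objective: each summand x |-> exp(-c D_i^2 x) lies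
   above its tangent at x_i, whose slope is -c exp(-2 Phi_c) when x_i > 0 and
   no steeper than that when x_i = 0; summing these bounds against
   sum_i y_i = sum_i x_i = T gives the claim. *)

Lemma continuous_sup_level (R : realType) (g : R -> R) (T : R) :
  continuous g -> has_sup [set z | g z <= T] -> g (sup [set z | g z <= T]) = T.
Proof.
move=> g_cont supS; set S := [set z | g z <= T]; set s := sup S.
have S_closed : closed S.
  exact: preimage_closed (fun z _ => g_cont z) (@closed_le _ T).
apply/eqP; rewrite eq_le; apply/andP; split.
  have : closure S s by apply: closure_sup; case: supS.
  by move/closure_id: S_closed => <-.
rewrite leNgt; apply/negP => gsT.
have : \forall z \near s, g z < T by exact: cvgr_lt (g_cont s) _ gsT.
move=> /nbhs_ballP[e /= e_gt0 sub_e].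
have : S (s + e / 2).
  apply/ltW/sub_e; rewrite -ball_normE /= opprD addNKr normrN gtr0_norm ?divr_gt0 //.
  by rewrite ltr_pdivrMr // ltr_pMr // ltr1n.
by move=> /(sup_upper_bound supS); rewrite -/s gerDl leNgt divr_gt0.
Qed.

Lemma ler_sum_term (R : numDomainType) (I : finType) (F : I -> R) (i : I) :
  (forall j, 0 <= F j) -> F i <= \sum_j F j.
Proof. by move=> F_ge0; rewrite (bigD1 i) //= lerDl sumr_ge0. Qed.

Lemma expR_tangent (R : realType) (a x y : R) :
  expR (- (a * x)) - a * expR (- (a * x)) * (y - x) <= expR (- (a * y)).
Proof.
have -> : - (a * y) = - (a * x) + - (a * (y - x)) by ring.
have := ler_wpM2l (ltW (expR_gt0 (- (a * x)))) (expR_ge1Dx (- (a * (y - x)))).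
by rewrite expRD; nra.
Qed.

Lemma expR_kkt (R : realType) (a l x y : R) : 0 <= y ->
  a * expR (- (a * x)) <= l -> (l - a * expR (- (a * x))) * x = 0 ->
  expR (- (a * x)) - l * (y - x) <= expR (- (a * y)).
Proof.
move=> y_ge0 slope_le slack; have := expR_tangent a x y; nra.
Qed.

Definition water_fill {R : realType} (c d z : R) : R :=
  Num.max ((z - ln d^-1) / (c * d ^+ 2 / 2)) 0.

Section WaterFill.
Variables (R : realType) (c d : R).
Hypotheses (c_gt0 : 0 < c) (d_gt0 : 0 < d).

Let w_gt0 : 0 < c * d ^+ 2 / 2.
Proof. by rewrite divr_gt0 // mulr_gt0 // exprn_gt0. Qed.

Lemma water_fill_ge0 z : 0 <= water_fill c d z.
Proof. by rewrite le_max lexx orbT. Qed.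

Lemma water_fill_ge z : (z - ln d^-1) / (c * d ^+ 2 / 2) <= water_fill c d z.
Proof. by rewrite le_max lexx. Qed.

Lemma water_fill_eq0 z : z <= ln d^-1 -> water_fill c d z = 0.
Proof.
by move=> zb; apply/max_r; rewrite pmulr_lle0 ?invr_gt0 // subr_le0.
Qed.

Lemma water_fill_le_bound z t :
  water_fill c d z <= t -> z <= c * d ^+ 2 / 2 * t + ln d^-1.
Proof.
move=> /(le_trans (water_fill_ge z)).
by rewrite ler_pdivrMr // lerBlDr mulrC.
Qed.

Lemma water_fill_continuous : continuous (water_fill c d).
Proof.
apply: max_fun_continuous; last exact: cst_continuous.
by move=> z; apply: cvgM; [apply: cvgB; [exact: cvg_id | exact: cvg_cst] | exact: cvg_cst].
Qed.

Lemma water_fill_kkt z y : 0 <= y ->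
  expR (- (c * water_fill c d z * d ^+ 2)) - c * expR (- (2 * z)) * (y - water_fill c d z)
    <= expR (- (c * y * d ^+ 2)).
Proof.
move=> y_ge0; rewrite !(mulrAC c _ (d ^+ 2)).
have d2E : d ^+ 2 = expR (2 * ln d) by rewrite expRM_natl lnK ?posrE.
have lnVd : ln d^-1 = - ln d by rewrite lnV ?posrE.
have [zb | bz] := leP z (ln d^-1).
- rewrite water_fill_eq0 //; apply: expR_kkt; rewrite ?mulr0 ?oppr0 ?expR0 ?mulr1 //.
  by rewrite ler_pM2l // d2E ler_expR; lra.
- have xE : c * d ^+ 2 * water_fill c d z = 2 * z + 2 * ln d.
    rewrite /water_fill max_l; last by rewrite divr_ge0 ?subr_ge0 ?ltW.
    by rewrite lnVd; field; rewrite !gt_eqF.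
  have slopeE : c * d ^+ 2 * expR (- (2 * z + 2 * ln d)) = c * expR (- (2 * z)).
    by rewrite d2E -mulrA -expRD; congr (c * expR _); ring.
  by apply: expR_kkt; rewrite // xE slopeE ?subrr ?mul0r.
Qed.

End WaterFill.

Lemma has_sup_water_level (R : realType) (K : nat) (c T : R) (D : 'I_K -> R) :
  (0 < K)%N -> 0 < c -> 0 <= T -> (forall i, 0 < D i) ->
  has_sup [set z | \sum_(i < K) water_fill c (D i) z <= T].
Proof.
move=> K_gt0 c_gt0 T_ge0 D_gt0; split.
  exists (- \sum_j `|ln (D j)^-1|); rewrite /= big1 // => i _.
  apply: water_fill_eq0 => //; apply: lerNnormlW.
  by apply: ler_sum_term => j.
pose i0 := Ordinal K_gt0.
exists (c * D i0 ^+ 2 / 2 * T + ln (D i0)^-1) => z /= level_le.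
apply: water_fill_le_bound => //; apply: le_trans level_le.
by apply: ler_sum_term => j; apply: water_fill_ge0.
Qed.

Theorem lemma3 (R : realType) (K : nat) (hK : (0 < K)%N) (c T : R)
  (D : 'I_K -> R) (hc : 0 < c) (hT : 0 < T) (hD : forall i, 0 < D i) :
  Poptimal c D T
    (fun i => Num.max ((Phi c D T - ln (D i)^-1) / (c * D i ^+ 2 / 2)) 0).
Proof.
have level_Phi : \sum_i water_fill c (D i) (Phi c D T) = T.
  apply: (@continuous_sup_level _ (fun z => \sum_i water_fill c (D i) z));
    last exact: has_sup_water_level hK hc (ltW hT) hD.
  by apply: continuous_big => [|i _]; [exact: add_continuous | exact: water_fill_continuous].
split; first by split => // i; apply: water_fill_ge0.
move=> y [sum_y y_ge0]; rewrite /Pobj.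
apply: le_trans _ (ler_sum _ (fun i (_ : true) => water_fill_kkt hc (hD i) (Phi c D T) (y_ge0 i))).
by rewrite sumrB -mulr_sumr sumrB sum_y level_Phi subrr mulr0 subr0.
Qed.
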